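(* Let $\mathcal{A}=(T(\Sigma,X),\Rightarrow_\Pi)$ be an abstract reduction system closed under substitutions, and let $(u_1\Rightarrow_{w_1}v_1,\ u_2\Rightarrow_{w_2}v_2)$ be a recurrent pair in $\mathcal{A}$, with $c_1,c_2,x,y,s,t,n_1,n_2,n_3,n_4$ as in the definition of recurrent pair. Then for all $m,n\in\mathbb{N}$ with $n\ge n_2$ there exist $m',n'\in\mathbb{N}$ with $n'\ge n_2$ such that $c_1[m,n]\ (\Rightarrow_{w_1}^{*}\circ\Rightarrow_{w_2})\ c_1[m',n']$.
   Context: Fix a signature $\Sigma$, a countably infinite set $X$ of variables disjoint from $\Sigma$, and two distinct fresh hole constants $\square,\square'\notin\Sigma\cup X$. Terms are elements of $T(\Sigma,X)$; substitutions $\theta$ (maps $X\to T(\Sigma,X)$ moving finitely many variables) act homomorphically; $\mathit{Var}$ denotes the variable set. An abstract reduction system $(A,\Rightarrow_\Pi)$ has $\Rightarrow_\Pi=\bigcup_{\pi\in\Pi}\Rightarrow_\pi$; for $w=\langle\pi_1,\dots,\pi_k\rangle\in\Pi^*$, $\Rightarrow_w=\Rightarrow_{\pi_1}\circ\cdots\circ\Rightarrow_{\pi_k}$ ($\Rightarrow_\epsilon$ the identity), where $\phi\circ\varphi=\{(a,a'')\mid\exists a_1,(a,a_1)\in\phi,(a_1,a'')\in\varphi\}$; $\Rightarrow_w^*$ is the reflexive-transitive closure of $\Rightarrow_w$. It is closed under substitutions if for all $s,t\in A$, $w\in\Pi^*$ and substitutions $\theta$, $s\Rightarrow_w t$ implies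 $s\theta\Rightarrow_w t\theta$. Let $c_1$ be a term over $\Sigma\cup\{\square,\square'\}$ and $X$ containing at least one occurrence of $\square$ and of $\square'$, and $c_1[t,t']$ the result of replacing all $\square$ by $t$ and all $\square'$ by $t'$. Let $c_2$ be a term over $\Sigma\cup\{\square\}$ and $X$ containing at least one $\square$ (and no $\square'$), $c_2[t]$ the result of replacing all $\square$ by $t$, $c_2^0[t]=t$, $c_2^{k+1}[t]=c_2[c_2^k[t]]$. A recurrent pair in $\mathcal{A}$ is a pair of chains $u_1\Rightarrow_{w_1}v_1$ and $u_2\Rightarrow_{w_2}v_2$ ($w_1,w_2\in\Pi^*$) such that: $u_1=c_1[x,c_2[y]]$, $v_1=c_1[c_2^{n_1}[x],y]$, $u_2=c_1[x,c_2^{n_2}[s]]$, $v_2=c_1[c_2^{n_3}[t],c_2^{n_4}[x]]$ for variables $x\neq y$ with $\{x,y\}\cap\mathit{Var}(c_1)=\emptyset$, a term $s$, naturals $n_1,n_2,n_3,n_4$; $\mathit{Var}(c_2)=\mathit{Var}(s)=\emptyset$; $t\in\{x,s\}$; and $n_4\ge n_2$. For $m,n\in\mathbb{N}$, $c_1[m,n]$ denotes the term $c_1[c_2^m[s],c_2^n[s]]$. *)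

From Stdlib Require Import List Arith Relations.
Import ListNotations.
Set Implicit Arguments.

Section Terms.
Variable F : Type.
Variable arity : F -> nat.

(* Variables X := nat (a countably infinite set disjoint from Sigma). *)
Inductive term : Type :=
| Var : nat -> term
| Fun : F -> list term -> term.

(* well-formed terms: elements of T(Sigma, X) *)
Fixpoint wf (t : term) : bool :=
  match t with
  | Var _ => true
  | Fun f l => Nat.eqb (length l) (arity f) && forallb wf l
  end.

Fixpoint tvars (t : term) : list nat :=
  match t with
  | Var x => [x]
  | Fun _ l => flat_map tvars l
  end.

Fixpoint subst (th : nat -> term) (t : term) : term :=
  match t with
  | Var x => th x
  | Fun f l => Fun f (map (subst th) l)
  end.

Definition is_subst (th : nat -> term) : Prop :=
  (forall x, wf (th x) = true) /\
  exists dom : list nat, forall x, ~ In x dom -> th x = Var x.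

Inductive ctx : Type :=
| CVar : nat -> ctx
| CFun : F -> list ctx -> ctx
| Hole1 : ctx
| Hole2 : ctx.

Fixpoint cwf (c : ctx) : bool :=
  match c with
  | CFun f l => Nat.eqb (length l) (arity f) && forallb cwf l
  | _ => true
  end.

Fixpoint has_hole1 (c : ctx) : bool :=
  match c with
  | Hole1 => true
  | CFun _ l => existsb has_hole1 l
  | _ => false
  end.

Fixpoint has_hole2 (c : ctx) : bool :=
  match c with
  | Hole2 => true
  | CFun _ l => existsb has_hole2 l
  | _ => false
  end.

Fixpoint cvars (c : ctx) : list nat :=
  match c with
  | CVar x => [x]
  | CFun _ l => flat_map cvars l
  | _ => []
  end.

Fixpoint fill (c : ctx) (t t' : term) : term :=
  match c with
  | CVar x => Var x
  | CFun f l => Fun f (map (fun d => fill d t t') l)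
  | Hole1 => t
  | Hole2 => t'
  end.

(* for a context c2 without □': c2[t] *)
Definition fill1 (c : ctx) (t : term) : term := fill c t t.

Fixpoint fill_iter (c : ctx) (k : nat) (t : term) : term :=
  match k with
  | 0 => t
  | S k' => fill1 c (fill_iter c k' t)
  end.

End Terms.

Definition rcomp {A : Type} (phi psi : relation A) : relation A :=
  fun a a'' => exists a1, phi a a1 /\ psi a1 a''.

Fixpoint steps {A Pi : Type} (step : Pi -> relation A) (w : list Pi) : relation A :=
  match w with
  | [] => fun a b => a = b
  | p :: w' => rcomp (step p) (steps step w')
  end.

Definition ars_on_terms {F Pi : Type} (arity : F -> nat)
  (step : Pi -> relation (term F)) : Prop :=
  forall p s t, step p s t -> wf arity s = true /\ wf arity t = true.

Definition closed_under_subst {F Pi : Type} (arity : F -> nat)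
  (step : Pi -> relation (term F)) : Prop :=
  forall (w : list Pi) (s t : term F) (th : nat -> term F),
    wf arity s = true -> wf arity t = true -> is_subst arity th ->
    steps step w s t -> steps step w (subst th s) (subst th t).

From Stdlib Require Import List Arith Relations Lia.

(* Since c2 and s are ground and x, y do not occur in c1, a substitution for
   x and y acts on the chains only through the hole contents.  Instantiating
   the first chain with x := c2^a[s] and y := c2^b[s] thus gives
   c1[a, b+1] =>_{w1} c1[a+n1, b]; iterating it n-n2 times moves c1[m, n] to
   c1[M, n2] with M = m + (n-n2) n1.  Instantiating the second chain with
   x := c2^M[s] then gives c1[M, n2] =>_{w2} c1[m', n4 + M], and n4 + M >= n2. *)

Section Terms.
Context {F : Type} {arity : F -> nat}.

Fixpoint term_nested_ind (P : term F -> Prop) (HVar : forall z, P (Var F z))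
  (HFun : forall f l, Forall P l -> P (Fun f l)) (t : term F) : P t :=
  match t with
  | Var _ z => HVar z
  | Fun f l =>
      HFun f l ((fix go (l : list (term F)) : Forall P l :=
                   match l with
                   | nil => Forall_nil P
                   | a :: l' => Forall_cons a (@term_nested_ind P HVar HFun a) (go l')
                   end) l)
  end.

Fixpoint ctx_nested_ind (P : ctx F -> Prop) (HVar : forall z, P (CVar F z))
  (HFun : forall f l, Forall P l -> P (CFun f l))
  (HHole1 : P (Hole1 F)) (HHole2 : P (Hole2 F)) (c : ctx F) : P c :=
  match c with
  | CVar _ z => HVar z
  | CFun f l =>
      HFun f l ((fix go (l : list (ctx F)) : Forall P l :=
                   match l with
                   | nil => Forall_nil P
                   | a :: l' =>
                       Forall_cons a (@ctx_nested_ind P HVar HFun HHole1 HHole2 a) (go l')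
                   end) l)
  | Hole1 _ => HHole1
  | Hole2 _ => HHole2
  end.

Lemma subst_id_on (th : nat -> term F) (t : term F) :
  (forall z, In z (tvars t) -> th z = Var F z) -> subst th t = t.
Proof.
  induction t as [z | f l IHl] using term_nested_ind; simpl; intros Hth.
  - apply Hth; left; reflexivity.
  - f_equal. rewrite <- (map_id l) at 2. apply map_ext_in. intros a Ha.
    rewrite Forall_forall in IHl. apply IHl; [exact Ha |].
    intros z Hz. apply Hth, in_flat_map. eauto.
Qed.

Lemma subst_ground (th : nat -> term F) (t : term F) :
  tvars t = nil -> subst th t = t.
Proof. intros Ht. apply subst_id_on. rewrite Ht. contradiction. Qed.

Lemma subst_fill (th : nat -> term F) (c : ctx F) (A B : term F) :
  (forall z, In z (cvars c) -> th z = Var F z) ->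
  subst th (fill c A B) = fill c (subst th A) (subst th B).
Proof.
  induction c as [z | f l IHl | |] using ctx_nested_ind; simpl; intros Hth;
    try reflexivity.
  - apply Hth; left; reflexivity.
  - f_equal. rewrite map_map. apply map_ext_in. intros d Hd.
    rewrite Forall_forall in IHl. apply IHl; [exact Hd |].
    intros z Hz. apply Hth, in_flat_map. eauto.
Qed.

Lemma wf_fill {c : ctx F} {A B : term F} :
  cwf arity c = true -> wf arity A = true -> wf arity B = true ->
  wf arity (fill c A B) = true.
Proof.
  intros Hc HA HB.
  induction c as [z | f l IHl | |] using ctx_nested_ind; simpl in *; auto.
  apply andb_prop in Hc as [Hlen Hl]. apply andb_true_intro; split.
  - rewrite length_map. exact Hlen.
  - rewrite forallb_forall in Hl |- *. rewrite Forall_forall in IHl.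
    intros u Hu. apply in_map_iff in Hu as [d [<- Hd]]. auto.
Qed.

Lemma fill_iter_add (c : ctx F) (a b : nat) (t : term F) :
  fill_iter c a (fill_iter c b t) = fill_iter c (a + b) t.
Proof. induction a as [| a IHa]; simpl; congruence. Qed.

Lemma wf_fill_iter {c : ctx F} (k : nat) {t : term F} :
  cwf arity c = true -> wf arity t = true -> wf arity (fill_iter c k t) = true.
Proof. intros Hc Ht. induction k; simpl; [exact Ht | apply wf_fill; auto]. Qed.

Lemma subst_fill_iter (th : nat -> term F) (c : ctx F) (k : nat) (t : term F) :
  cvars c = nil -> subst th (fill_iter c k t) = fill_iter c k (subst th t).
Proof.
  intros Hc. induction k as [| k IHk]; simpl; [reflexivity |].
  unfold fill1. rewrite subst_fill, IHk; [reflexivity |].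
  rewrite Hc. contradiction.
Qed.

Definition fill_iter2 (c d : ctx F) (s : term F) (m n : nat) : term F :=
  fill c (fill_iter d m s) (fill_iter d n s).

Definition subst2 (x y : nat) (u v : term F) (z : nat) : term F :=
  if Nat.eqb z x then u else if Nat.eqb z y then v else Var F z.

Lemma subst2_l (x y : nat) (u v : term F) : subst2 x y u v x = u.
Proof. unfold subst2. rewrite Nat.eqb_refl. reflexivity. Qed.

Lemma subst2_r (x y : nat) (u v : term F) : x <> y -> subst2 x y u v y = v.
Proof.
  intros Hxy. unfold subst2.
  destruct (Nat.eqb_spec y x); [congruence |]. rewrite Nat.eqb_refl. reflexivity.
Qed.

Lemma is_subst_subst2 (x y : nat) {u v : term F} :
  wf arity u = true -> wf arity v = true -> is_subst arity (subst2 x y u v).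
Proof.
  intros Hu Hv. split.
  - intros z. unfold subst2. destruct (Nat.eqb z x), (Nat.eqb z y); auto.
  - exists (x :: y :: nil). intros z Hz. unfold subst2.
    destruct (Nat.eqb_spec z x), (Nat.eqb_spec z y); subst; simpl in Hz; tauto.
Qed.

Lemma subst2_fill (x y : nat) (u v : term F) (c : ctx F) (A B : term F) :
  ~ In x (cvars c) -> ~ In y (cvars c) ->
  subst (subst2 x y u v) (fill c A B) =
  fill c (subst (subst2 x y u v) A) (subst (subst2 x y u v) B).
Proof.
  intros Hx Hy. apply subst_fill. intros z Hz. unfold subst2.
  destruct (Nat.eqb_spec z x); [subst; contradiction |].
  destruct (Nat.eqb_spec z y); [subst; contradiction | reflexivity].
Qed.

End Terms.

Section RecurrentPair.
Context {F : Type} {arity : F -> nat} {Pi : Type} {step : Pi -> relation (term F)}.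
Hypothesis Hclosed : closed_under_subst arity step.
Context {c1 c2 : ctx F} {x y : nat} {s t : term F} {n1 n2 n3 n4 : nat}
  {w1 w2 : list Pi}.
Hypotheses (Hc1wf : cwf arity c1 = true) (Hc2wf : cwf arity c2 = true)
  (Hswf : wf arity s = true) (Hxy : x <> y)
  (Hxc1 : ~ In x (cvars c1)) (Hyc1 : ~ In y (cvars c1))
  (Hc2vars : cvars c2 = nil) (Hsvars : tvars s = nil)
  (Ht : t = Var F x \/ t = s).

Hypothesis Hchain1 : steps step w1
  (fill c1 (Var F x) (fill1 c2 (Var F y)))
  (fill c1 (fill_iter c2 n1 (Var F x)) (Var F y)).

Lemma first_chain_instance (a b : nat) :
  steps step w1 (fill_iter2 c1 c2 s a (S b)) (fill_iter2 c1 c2 s (n1 + a) b).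
Proof.
  set (th := subst2 x y (fill_iter c2 a s) (fill_iter c2 b s)).
  assert (Hwfx : wf arity (Var F x) = true) by reflexivity.
  assert (Hwfy : wf arity (Var F y) = true) by reflexivity.
  change (fill1 c2 (Var F y)) with (fill_iter c2 1 (Var F y)) in Hchain1.
  pose proof (@Hclosed w1 _ _ th
    (wf_fill Hc1wf Hwfx (wf_fill_iter 1 Hc2wf Hwfy))
    (wf_fill Hc1wf (wf_fill_iter n1 Hc2wf Hwfx) Hwfy)
    (is_subst_subst2 x y (wf_fill_iter a Hc2wf Hswf) (wf_fill_iter b Hc2wf Hswf))
    Hchain1) as Hinst.
  unfold th in Hinst.
  rewrite !subst2_fill, !subst_fill_iter in Hinst by assumption; simpl in Hinst.
  rewrite subst2_l, subst2_r, !fill_iter_add in Hinst by assumption.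
  exact Hinst.
Qed.

Lemma first_chain_iter (k a b : nat) :
  clos_refl_trans _ (steps step w1)
    (fill_iter2 c1 c2 s a (k + b)) (fill_iter2 c1 c2 s (k * n1 + a) b).
Proof.
  revert a. induction k as [| k IHk]; intros a; simpl; [apply rt_refl |].
  eapply rt_trans; [apply rt_step, first_chain_instance |].
  replace (n1 + k * n1 + a) with (k * n1 + (n1 + a)) by lia. apply IHk.
Qed.

Hypothesis Hchain2 : steps step w2
  (fill c1 (Var F x) (fill_iter c2 n2 s))
  (fill c1 (fill_iter c2 n3 t) (fill_iter c2 n4 (Var F x))).

Lemma second_chain_instance (a : nat) :
  exists m', steps step w2 (fill_iter2 c1 c2 s a n2) (fill_iter2 c1 c2 s m' (n4 + a)).
Proof.
  set (th := subst2 x y (fill_iter c2 a s) (Var F y)).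
  assert (Hwfx : wf arity (Var F x) = true) by reflexivity.
  assert (Hwfy : wf arity (Var F y) = true) by reflexivity.
  assert (Hwft : wf arity t = true) by (destruct Ht as [-> | ->]; auto).
  pose proof (@Hclosed w2 _ _ th
    (wf_fill Hc1wf Hwfx (wf_fill_iter n2 Hc2wf Hswf))
    (wf_fill Hc1wf (wf_fill_iter n3 Hc2wf Hwft) (wf_fill_iter n4 Hc2wf Hwfx))
    (is_subst_subst2 x y (wf_fill_iter a Hc2wf Hswf) Hwfy)
    Hchain2) as Hinst.
  unfold th in Hinst.
  rewrite !subst2_fill, !subst_fill_iter in Hinst by assumption; simpl in Hinst.
  rewrite subst_ground, subst2_l, fill_iter_add in Hinst by assumption.
  destruct Ht as [-> | ->]; simpl in Hinst.
  - rewrite subst2_l, fill_iter_add in Hinst. exists (n3 + a). exact Hinst.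
  - rewrite subst_ground in Hinst by assumption. exists n3. exact Hinst.
Qed.

End RecurrentPair.

Theorem proposition12
  (F : Type) (arity : F -> nat) (Pi : Type) (step : Pi -> relation (term F))
  (Hars : ars_on_terms arity step)
  (Hclosed : closed_under_subst arity step)
  (c1 c2 : ctx F) (x y : nat) (s t : term F) (n1 n2 n3 n4 : nat)
  (w1 w2 : list Pi)
  (* c1 : a term over Sigma ∪ {□,□'} and X with at least one □ and one □' *)
  (Hc1wf : cwf arity c1 = true)
  (Hc1h1 : has_hole1 c1 = true) (Hc1h2 : has_hole2 c1 = true)
  (* c2 : a term over Sigma ∪ {□} and X with at least one □ and no □' *)
  (Hc2wf : cwf arity c2 = true)
  (Hc2h1 : has_hole1 c2 = true) (Hc2h2 : has_hole2 c2 = false)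
  (Hswf : wf arity s = true)
  (* side conditions of a recurrent pair *)
  (Hxy : x <> y)
  (Hxc1 : ~ In x (cvars c1)) (Hyc1 : ~ In y (cvars c1))
  (Hc2vars : cvars c2 = nil) (Hsvars : tvars s = nil)
  (Ht : t = Var F x \/ t = s)
  (Hn : n2 <= n4)
  (* the two chains u1 =>_{w1} v1 and u2 =>_{w2} v2 *)
  (Hchain1 : steps step w1
               (fill c1 (Var F x) (fill1 c2 (Var F y)))
               (fill c1 (fill_iter c2 n1 (Var F x)) (Var F y)))
  (Hchain2 : steps step w2
               (fill c1 (Var F x) (fill_iter c2 n2 s))
               (fill c1 (fill_iter c2 n3 t) (fill_iter c2 n4 (Var F x)))) :
  forall m n : nat, n2 <= n ->
    exists m' n' : nat, n2 <= n' /\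
      rcomp (clos_refl_trans _ (steps step w1)) (steps step w2)
        (fill c1 (fill_iter c2 m s) (fill_iter c2 n s))
        (fill c1 (fill_iter c2 m' s) (fill_iter c2 n' s)).
Proof.
  intros m n Hn2.
  set (M := (n - n2) * n1 + m).
  destruct (second_chain_instance Hclosed Hc1wf Hc2wf Hswf Hxc1 Hyc1 Hc2vars Hsvars
              Ht Hchain2 M) as [m' Hsecond].
  exists m', (n4 + M). split; [lia |].
  exists (fill_iter2 c1 c2 s M n2). split; [| exact Hsecond].
  replace n with ((n - n2) + n2) at 1 by lia.
  exact (first_chain_iter Hclosed Hc1wf Hc2wf Hswf Hxy Hxc1 Hyc1 Hc2vars Hchain1
           (n - n2) m n2).
Qed.
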